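(* Let $H$ be a $4$-tournament on $7$ vertices and let $C=v_1b_1v_2\dots v_7b_7v_1$ be a Hamiltonian cycle of $H$. Then any two different pairs of vertices, each consisting of two vertices that are not consecutive on $C$, are simultaneously contained in at most four of the hyperarcs $b_1,\dots,b_7$.
   Context: For $2\le k\le n$, a $k$-tournament $H$ on $n$ vertices is a pair $(V,A)$ where $V$ is a set of $n$ vertices and $A$ is a set of $k$-tuples of distinct vertices (hyperarcs) such that for every $k$-subset $S\subseteq V$, $A$ contains exactly one of the $k!$ orderings of $S$. For a hyperarc $a=(x_1\dots x_k)$, $x_i$ precedes $x_j$ if $i<j$. A Hamiltonian cycle is an alternating sequence $v_1b_1v_2\dots v_nb_nv_1$ of all $n$ distinct vertices and $n$ distinct hyperarcs such that $v_i$ precedes $v_{i+1}$ in $b_i$ (indices mod $n$). Two vertices are consecutive on $C$ if they are $v_i,v_{i+1}$ for some $i$ (mod $7$). A pair is contained in a hyperarc if both its vertices belong to the vertex set of the hyperarc. *)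

From mathcomp Require Import all_boot.
Set Implicit Arguments. Unset Strict Implicit. Unset Printing Implicit Defensive.

Definition is_tournament (k : nat) (V : finType) (A : {set k.-tuple V}) : Prop :=
  (forall a, a \in A -> uniq a) /\
  (forall S : {set V}, #|S| = k ->
     #|[set a in A | [set x in a] == S]| = 1).

Definition precedes (k : nat) (V : eqType) (x y : V) (a : k.-tuple V) : bool :=
  [&& x \in a, y \in a & index x a < index y a].

(* Hamiltonian cycle v_1 b_1 v_2 ... v_n b_n v_1 of the k-tournament A on V
   with #|V| = n, indexed by 'I_n (successor ordS is taken mod n):
   all n vertices distinct, all n hyperarcs distinct and in A, and
   v i precedes v (i+1 mod n) in b i. *)
Definition hamiltonian_cycle (k n : nat) (V : finType) (A : {set k.-tuple V})
    (v : 'I_n -> V) (b : 'I_n -> k.-tuple V) : Prop :=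
  injective v /\ injective b /\ (forall i, b i \in A) /\
  (forall i, precedes (v i) (v (ordS i)) (b i)).

Definition consecutive_pair (n : nat) (V : finType) (v : 'I_n -> V) (P : {set V}) : Prop :=
  exists i : 'I_n, P = [set v i; v (ordS i)].

Definition arc_set (k : nat) (V : finType) (a : k.-tuple V) : {set V} := [set x in a].

From mathcomp Require Import all_boot zify.

Set Implicit Arguments.
Unset Strict Implicit.
Unset Printing Implicit Defensive.

(* The hyperarcs of a tournament are determined by their vertex sets, so the
   b_i containing P :|: Q have pairwise distinct 4-element vertex sets, all
   containing P :|: Q.  As P and Q are distinct 2-sets, P :|: Q has at least
   3 vertices; removing it from such a vertex set leaves a set of at most one
   vertex among the at most 4 vertices outside P :|: Q, which bounds the count
   by 'C(4, 1) = 4. *)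

Section Supersets.

Variable T : finType.

Lemma card_supsets_le (U : {set T}) (k : nat) :
  #|[set S : {set T} | U \subset S & #|S| == k]| <= 'C(#|T| - #|U|, k - #|U|).
Proof.
set F := [set S : {set T} | _].
have remU_inj : {in F &, injective (fun S => S :\: U)}.
  move=> S1 S2; rewrite !inE => /andP[US1 _] /andP[US2 _] E.
  by rewrite -(setID S1 U) -(setID S2 U) (setIidPr US1) (setIidPr US2) E.
rewrite -(card_in_imset remU_inj) -(cardsC U) addKn -cards_draws.
apply: subset_leq_card; apply/subsetP => _ /imsetP[S + ->].
rewrite !inE => /andP[US /eqP <-].
by rewrite cardsD (setIidPr US) eqxx setDE subsetIr.
Qed.

Lemma card_family_supsets_le (I : finType) (S : I -> {set T}) (k : nat)
    (U : {set T}) :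
  injective S -> (forall i, #|S i| = k) ->
  #|[set i | U \subset S i]| <= 'C(#|T| - #|U|, k - #|U|).
Proof.
move=> S_inj cardS; rewrite -(card_imset _ S_inj).
apply: leq_trans (card_supsets_le U k); apply: subset_leq_card.
apply/subsetP=> _ /imsetP[i + ->]; rewrite !inE => US.
by rewrite US cardS eqxx.
Qed.

Lemma card_setU_neq (P Q : {set T}) :
  #|P| = #|Q| -> P != Q -> #|P| < #|P :|: Q|.
Proof.
move=> cPQ neqPQ; apply: proper_card; rewrite properEneq subsetUl andbT.
apply: contra neqPQ => /eqP PUQ; rewrite eq_sym eqEcard cPQ leqnn andbT.
by rewrite PUQ subsetUr.
Qed.

End Supersets.

Lemma card_arc_set (k : nat) (V : finType) (a : k.-tuple V) :
  uniq a -> #|arc_set a| = k.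
Proof. by move/card_uniqP; rewrite /arc_set cardsE size_tuple. Qed.

Lemma tournament_arc_set_inj (k : nat) (V : finType) (A : {set k.-tuple V}) :
  is_tournament A -> {in A &, injective (@arc_set k V)}.
Proof.
move=> [A_uniq A_one] a1 a2 a1A a2A E.
have /cards1P[a Ea] := introT eqP (A_one _ (card_arc_set (A_uniq _ a2A))).
have : a1 \in [set a in A | [set x in a] == arc_set a2].
  by rewrite inE a1A -E eqxx.
have : a2 \in [set a in A | [set x in a] == arc_set a2].
  by rewrite inE a2A eqxx.
by rewrite Ea !inE => /eqP -> /eqP ->.
Qed.

Theorem lemma3 (V : finType) (A : {set 4.-tuple V})
    (v : 'I_7 -> V) (b : 'I_7 -> 4.-tuple V) (P Q : {set V}) :
  #|V| = 7 ->
  is_tournament A ->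
  hamiltonian_cycle A v b ->
  #|P| = 2 -> #|Q| = 2 -> P != Q ->
  ~ consecutive_pair v P -> ~ consecutive_pair v Q ->
  #|[set i : 'I_7 | (P :|: Q) \subset arc_set (b i)]| <= 4.
Proof.
move=> cV tourA [_ [b_inj [bA _]]] cP cQ neqPQ _ _.
have arcs_inj : injective (fun i => arc_set (b i)).
  by move=> i j /(tournament_arc_set_inj tourA (bA i) (bA j)) /b_inj.
have card_arcs i : #|arc_set (b i)| = 4.
  by case: tourA => A_uniq _; exact: card_arc_set (A_uniq _ (bA i)).
apply: leq_trans (card_family_supsets_le (P :|: Q) arcs_inj card_arcs) _.
have := card_setU_neq (etrans cP (esym cQ)) neqPQ; rewrite cV cP.
have [-> // | neq3 gt2] := eqVneq #|P :|: Q| 3.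
by rewrite (_ : 4 - _ = 0) ?bin0 //; lia.
Qed.
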